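(* The axiom system $\mathbf{AX}^{f}=\{\mathrm{Taut},\mathrm{MP},F1,F2,F3,F4,F5,F6\}$ is sound and complete for formulas about linear inequalities over real-valued functions with nonempty domain: such a formula is provable in $\mathbf{AX}^f$ iff it is valid.
   Context: Formulas about linear inequalities over real-valued functions are Boolean combinations of inequalities $a_1v_1+\cdots+a_kv_k\ge\tilde c$, where $v_1,v_2,\ldots$ are variables and $a_i,c$ are real numbers. Such a formula is satisfied by an assignment of functions $D\to\mathbb R$ (for a nonempty set $D$) to the variables if it holds when $\tilde c$ is read as the constant function $c$ on $D$, sums and scalar multiples pointwise, and $\ge$ as the pointwise order; Boolean connectives classical. It is valid if satisfied by every such assignment for every nonempty $D$. Abbreviations: $t\le\tilde d$ is $-t\ge\widetilde{-d}$; $t>\tilde d$ is $t\ge\tilde d\wedge\neg(t\le\tilde d)$. Axioms: Taut: all instances of propositional tautologies. MP: from $f$ and $f\Rightarrow g$ infer $g$. F1: $v-v\ge\tilde0$. F2: $(a_1v_1+\cdots+a_kv_k\ge\tilde c)\Leftrightarrow(a_1v_1+\cdots+a_kv_k+0v_{k+1}\ge\tilde c)$. F3: $(a_1v_1+\cdots+a_kv_k\ge\tilde c)\Leftrightarrow(a_{j_1}v_{j_1}+\cdots+a_{j_k}v_{j_k}\ge\tilde c)$ for any permutation $j_1,\ldots,j_k$ of $1,\ldots,k$. F4: $(a_1v_1+\cdots+a_kv_k\ge\tilde c)\wedge(a'_1v_1+\cdots+a'_kv_k\ge\tilde c')\Rightarrow((a_1+a'_1)v_1+\cdots+(a_k+a'_k)v_k\ge\widetilde{c+c'})$.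 F5: $(a_1v_1+\cdots+a_kv_k\ge\tilde c)\Leftrightarrow(da_1v_1+\cdots+da_kv_k\ge\widetilde{dc})$ for $d>0$. F6: $(a_1v_1+\cdots+a_kv_k\ge\tilde c)\Rightarrow(a_1v_1+\cdots+a_kv_k>\tilde d)$ if $c>d$. *)

From Stdlib Require Import Reals List Permutation.
Import ListNotations.
Open Scope R_scope.

(** A term a1 v1 + ... + ak vk is the list [(a1,v1); ...; (ak,vk)];
    variables are natural numbers. *)
Definition term := list (R * nat).

Inductive form : Type :=
| FIneq : term -> R -> form
| FNot  : form -> form
| FAnd  : form -> form -> form.

Definition FOr (f g : form) : form := FNot (FAnd (FNot f) (FNot g)).
Definition FImp (f g : form) : form := FNot (FAnd f (FNot g)).
Definition FIff (f g : form) : form := FAnd (FImp f g) (FImp g f).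

Definition FLe (t : term) (d : R) : form :=
  FIneq (map (fun p => (- fst p, snd p)) t) (- d).
Definition FGt (t : term) (d : R) : form := FAnd (FIneq t d) (FNot (FLe t d)).

Fixpoint eval_term {D : Type} (s : nat -> D -> R) (t : term) (x : D) : R :=
  match t with
  | [] => 0
  | (a, v) :: t' => a * s v x + eval_term s t' x
  end.

Fixpoint sat {D : Type} (s : nat -> D -> R) (f : form) : Prop :=
  match f with
  | FIneq t c => forall x : D, eval_term s t x >= c
  | FNot g => ~ sat s g
  | FAnd g h => sat s g /\ sat s h
  end.

Definition valid (f : form) : Prop :=
  forall (D : Type), inhabited D -> forall s : nat -> D -> R, sat s f.

Inductive pform : Type :=
| PVar : nat -> pform
| PNot : pform -> pform
| PAnd : pform -> pform -> pform.

Fixpoint peval (val : nat -> bool) (p : pform) : bool :=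
  match p with
  | PVar n => val n
  | PNot q => negb (peval val q)
  | PAnd q r => andb (peval val q) (peval val r)
  end.

Definition tautology (p : pform) : Prop := forall val, peval val p = true.

Fixpoint psubst (sb : nat -> form) (p : pform) : form :=
  match p with
  | PVar n => sb n
  | PNot q => FNot (psubst sb q)
  | PAnd q r => FAnd (psubst sb q) (psubst sb r)
  end.

Definition taut_instance (f : form) : Prop :=
  exists (p : pform) (sb : nat -> form), tautology p /\ psubst sb p = f.

Inductive provable : form -> Prop :=
| AxTaut : forall f, taut_instance f -> provable f
| RuleMP : forall f g, provable f -> provable (FImp f g) -> provable g
| AxF1 : forall v : nat, provable (FIneq [(1, v); (-1, v)] 0)
| AxF2 : forall (t : term) (c : R) (v : nat),
    provable (FIff (FIneq t c) (FIneq (t ++ [(0, v)]) c))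
| AxF3 : forall (t t' : term) (c : R), Permutation t t' ->
    provable (FIff (FIneq t c) (FIneq t' c))
| AxF4 : forall (l : list (R * R * nat)) (c c' : R),
    provable (FImp
      (FAnd (FIneq (map (fun p => (fst (fst p), snd p)) l) c)
            (FIneq (map (fun p => (snd (fst p), snd p)) l) c'))
      (FIneq (map (fun p => (fst (fst p) + snd (fst p), snd p)) l) (c + c')))
| AxF5 : forall (t : term) (c d : R), d > 0 ->
    provable (FIff (FIneq t c)
                   (FIneq (map (fun p => (d * fst p, snd p)) t) (d * c)))
| AxF6 : forall (t : term) (c d : R), c > d ->
    provable (FImp (FIneq t c) (FGt t d)).

From Stdlib Require Import Reals Lra Lia List Permutation Classical ClassicalEpsilon.
Import ListNotations.
Open Scope R_scope.

(* Soundness is a check of each axiom. For completeness, a valid formula follows propositionally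
   from the negations of the rows of its truth table that falsify it, so it suffices to refute
   every conjunction of literals [t_i >= c_i], [~ u_j >= d_j] without a model. Over functions such
   a conjunction has a model as soon as each real system {t_i >= c_i, u_j < d_j} is feasible: one
   point per negated literal suffices, and the points satisfying all [t_i >= c_i] form the domain.
   An infeasible system yields, by Fourier-Motzkin elimination for strict and non-strict
   inequalities, an absurd positive combination; F4, F5 and F6 replay it as a proof, and F1-F3
   (through the provably nonnegative terms [b v + (- b) v]) identify terms with equal
   coefficients. *)

Definition PImp (p q : pform) : pform := PNot (PAnd p (PNot q)).
Definition P0 : pform := PVar 0.
Definition P1 : pform := PVar 1.
Definition P2 : pform := PVar 2.

(* Proves the instance [p[A, B, C / P0, P1, P2]] of a tautology [p] in at most three variables. *)
Ltac by_tautology p A B C :=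
  apply AxTaut; exists p, (fun i => match i with 0%nat => A | 1%nat => B | _ => C end);
  split; [let val := fresh "val" in
          intro val; simpl; destruct (val 0%nat), (val 1%nat), (val 2%nat); reflexivity
         | reflexivity].

Lemma imp_refl A : provable (FImp A A).
Proof. by_tautology (PImp P0 P0) A A A. Qed.

Lemma imp_trans A B C :
  provable (FImp A B) -> provable (FImp B C) -> provable (FImp A C).
Proof.
  intros hAB hBC.
  assert (T : provable (FImp (FImp A B) (FImp (FImp B C) (FImp A C)))).
  { by_tautology (PImp (PImp P0 P1) (PImp (PImp P1 P2) (PImp P0 P2))) A B C. }
  apply (RuleMP _ _ hBC), (RuleMP _ _ hAB), T.
Qed.

Lemma imp_weaken H B : provable B -> provable (FImp H B).
Proof.
  intro hB. assert (T : provable (FImp B (FImp H B))).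
  { by_tautology (PImp P0 (PImp P1 P0)) B H H. }
  apply (RuleMP _ _ hB), T.
Qed.

Lemma imp_and H A B :
  provable (FImp H A) -> provable (FImp H B) -> provable (FImp H (FAnd A B)).
Proof.
  intros hA hB.
  assert (T : provable (FImp (FImp H A) (FImp (FImp H B) (FImp H (FAnd A B))))).
  { by_tautology (PImp (PImp P0 P1) (PImp (PImp P0 P2) (PImp P0 (PAnd P1 P2)))) H A B. }
  apply (RuleMP _ _ hB), (RuleMP _ _ hA), T.
Qed.

Lemma and_elim_l A B : provable (FImp (FAnd A B) A).
Proof. by_tautology (PImp (PAnd P0 P1) P0) A B B. Qed.

Lemma and_elim_r A B : provable (FImp (FAnd A B) B).
Proof. by_tautology (PImp (PAnd P0 P1) P1) A B B. Qed.

Lemma and_intro A B : provable A -> provable B -> provable (FAnd A B).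
Proof.
  intros hA hB. assert (T : provable (FImp A (FImp B (FAnd A B)))).
  { by_tautology (PImp P0 (PImp P1 (PAnd P0 P1))) A B B. }
  apply (RuleMP _ _ hB), (RuleMP _ _ hA), T.
Qed.

Lemma iff_elim_l A B : provable (FIff A B) -> provable (FImp A B).
Proof. intro h. apply (RuleMP _ _ h), and_elim_l. Qed.

Lemma iff_elim_r A B : provable (FIff A B) -> provable (FImp B A).
Proof. intro h. apply (RuleMP _ _ h), and_elim_r. Qed.

Lemma imp_absurd H A :
  provable (FImp H A) -> provable (FImp H (FNot A)) -> provable (FNot H).
Proof.
  intros hA hnA.
  assert (T : provable (FImp (FImp H A) (FImp (FImp H (FNot A)) (FNot H)))).
  { by_tautology (PImp (PImp P0 P1) (PImp (PImp P0 (PNot P1)) (PNot P0))) H A A. }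
  apply (RuleMP _ _ hnA), (RuleMP _ _ hA), T.
Qed.

(** * Soundness *)

Lemma eval_term_app {D : Type} (s : nat -> D -> R) t1 t2 x :
  eval_term s (t1 ++ t2) x = eval_term s t1 x + eval_term s t2 x.
Proof. induction t1 as [|[a v] t IH]; simpl; [lra | rewrite IH; lra]. Qed.

Lemma eval_term_perm {D : Type} (s : nat -> D -> R) t t' x :
  Permutation t t' -> eval_term s t x = eval_term s t' x.
Proof. induction 1 as [| [a v] | [a v] [b w] |]; simpl; lra. Qed.

Lemma eval_term_add {D : Type} (s : nat -> D -> R) (l : list (R * R * nat)) x :
  eval_term s (map (fun p => (fst (fst p) + snd (fst p), snd p)) l) x =
  eval_term s (map (fun p => (fst (fst p), snd p)) l) x +
  eval_term s (map (fun p => (snd (fst p), snd p)) l) x.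
Proof. induction l as [|[[a b] v] l IH]; simpl; [lra | rewrite IH; lra]. Qed.

Lemma eval_term_scale {D : Type} (s : nat -> D -> R) d t x :
  eval_term s (map (fun p => (d * fst p, snd p)) t) x = d * eval_term s t x.
Proof. induction t as [|[a v] t IH]; simpl; [lra | rewrite IH; lra]. Qed.

Lemma eval_term_opp {D : Type} (s : nat -> D -> R) t x :
  eval_term s (map (fun p => (- fst p, snd p)) t) x = - eval_term s t x.
Proof. induction t as [|[a v] t IH]; simpl; [lra | rewrite IH; lra]. Qed.

Definition truth {D : Type} (s : nat -> D -> R) (f : form) : bool :=
  if excluded_middle_informative (sat s f) then true else false.

Lemma truth_spec {D : Type} (s : nat -> D -> R) f : truth s f = true <-> sat s f.
Proof. unfold truth. destruct (excluded_middle_informative _); intuition congruence. Qed.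

Lemma sat_psubst {D : Type} (s : nat -> D -> R) sb p :
  sat s (psubst sb p) <-> peval (fun i => truth s (sb i)) p = true.
Proof.
  induction p as [n | q IH | q IHq r IHr]; simpl.
  - symmetry. apply truth_spec.
  - destruct (peval _ q); simpl; intuition congruence.
  - rewrite IHq, IHr. destruct (peval _ q), (peval _ r); simpl; intuition congruence.
Qed.

Lemma sat_imp {D : Type} (s : nat -> D -> R) f g :
  sat s (FImp f g) <-> (sat s f -> sat s g).
Proof. simpl. split; [intros h hf; apply NNPP; tauto | tauto]. Qed.

Lemma sat_iff {D : Type} (s : nat -> D -> R) f g :
  sat s (FIff f g) <-> (sat s f <-> sat s g).
Proof.
  change (sat s (FIff f g)) with (sat s (FImp f g) /\ sat s (FImp g f)).
  rewrite !sat_imp. tauto.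
Qed.

Theorem soundness f : provable f -> valid f.
Proof.
  intros hf D [x0] s. induction hf as [f [p [sb [hp <-]]] | f g _ IHf _ IHfg | v | t c v
    | t t' c hperm | l c c' | t c d hd | t c d hcd].
  - apply sat_psubst, hp.
  - exact (proj1 (sat_imp s f g) IHfg IHf).
  - intro x. simpl. lra.
  - apply sat_iff. simpl. split; intros h x; specialize (h x);
      rewrite ?eval_term_app in *; simpl in *; lra.
  - apply sat_iff. simpl. split; intros h x; specialize (h x);
      rewrite (eval_term_perm _ _ _ x hperm) in *; exact h.
  - apply sat_imp. simpl. intros [h1 h2] x. rewrite eval_term_add.
    specialize (h1 x). specialize (h2 x). lra.
  - apply sat_iff. simpl. split; intros h x; specialize (h x); rewrite ?eval_term_scale in *.
    + apply Rle_ge, Rmult_le_compat_l; lra.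
    + apply Rge_le, Rmult_le_reg_l in h; lra.
  - apply sat_imp. intro h. unfold FGt, FLe. simpl. split; [intro x; specialize (h x); lra |].
    intro hle. specialize (hle x0). specialize (h x0).
    rewrite eval_term_opp in hle. lra.
Qed.

(** * Provable rewriting of a single inequality *)

Definition entails (t : term) (c : R) (t' : term) (c' : R) : Prop :=
  provable (FImp (FIneq t c) (FIneq t' c')).

Definition equiv_terms (t u : term) : Prop := forall c, entails t c u c /\ entails u c t c.

Definition zeros (t : term) : term := map (fun p => (0, snd p)) t.
Definition scale (d : R) (t : term) : term := map (fun p => (d * fst p, snd p)) t.

Lemma entails_refl t c : entails t c t c.
Proof. apply imp_refl. Qed.

Lemma entails_eq t c t' c' : t = t' -> c = c' -> entails t c t' c'.
Proof. intros -> ->. apply entails_refl. Qed.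

Lemma entails_trans t c t1 c1 t2 c2 : entails t c t1 c1 -> entails t1 c1 t2 c2 -> entails t c t2 c2.
Proof. apply imp_trans. Qed.

Lemma imp_entails H t c t' c' :
  provable (FImp H (FIneq t c)) -> entails t c t' c' -> provable (FImp H (FIneq t' c')).
Proof. apply imp_trans. Qed.

Lemma equiv_refl t : equiv_terms t t.
Proof. intro c. split; apply entails_refl. Qed.

Lemma equiv_sym t u : equiv_terms t u -> equiv_terms u t.
Proof. intros h c. destruct (h c). split; assumption. Qed.

Lemma equiv_trans t u w : equiv_terms t u -> equiv_terms u w -> equiv_terms t w.
Proof. intros h1 h2 c. destruct (h1 c), (h2 c). split; eapply entails_trans; eassumption. Qed.

Lemma equiv_perm t u : Permutation t u -> equiv_terms t u.
Proof. intros h c. split; apply iff_elim_l, AxF3; [| symmetry]; exact h. Qed.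

Lemma equiv_app_zero t v : equiv_terms t (t ++ [(0, v)]).
Proof. intro c. split; [apply iff_elim_l | apply iff_elim_r]; apply AxF2. Qed.

Lemma equiv_insert_zero t1 t2 v : equiv_terms (t1 ++ t2) (t1 ++ (0, v) :: t2).
Proof.
  apply (equiv_trans _ _ _ (equiv_app_zero _ v)), equiv_perm.
  rewrite <- app_assoc. apply Permutation_app_head. symmetry. apply Permutation_cons_append.
Qed.

Lemma equiv_app_zeros l t : equiv_terms t (t ++ zeros l).
Proof.
  revert t. induction l as [|[a v] l IH]; intro t; simpl.
  - rewrite app_nil_r. apply equiv_refl.
  - apply (equiv_trans _ _ _ (equiv_app_zero t v)).
    specialize (IH (t ++ [(0, v)])). rewrite <- app_assoc in IH. exact IH.
Qed.

Lemma entails_scale d t c : d > 0 -> entails t c (scale d t) (d * c).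
Proof. intro hd. apply iff_elim_l, AxF5, hd. Qed.

Lemma entails_weaken t c d : d <= c -> entails t c t d.
Proof.
  intros [hlt | ->].
  - apply (imp_trans _ _ _ (AxF6 t c d hlt)), and_elim_l.
  - apply entails_refl.
Qed.


Definition first_term (l : list (R * R * nat)) : term := map (fun p => (fst (fst p), snd p)) l.
Definition second_term (l : list (R * R * nat)) : term := map (fun p => (snd (fst p), snd p)) l.
Definition sum_term (l : list (R * R * nat)) : term :=
  map (fun p => (fst (fst p) + snd (fst p), snd p)) l.

Lemma imp_sum l c c' :
  provable (FImp (FAnd (FIneq (first_term l) c) (FIneq (second_term l) c'))
                 (FIneq (sum_term l) (c + c'))).
Proof. apply AxF4. Qed.

Definition pad_right (t : term) : list (R * R * nat) := map (fun p => (fst p, 0, snd p)) t.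
Definition pad_left (t : term) : list (R * R * nat) := map (fun p => (0, fst p, snd p)) t.

Lemma pad_right_terms t :
  first_term (pad_right t) = t /\ second_term (pad_right t) = zeros t /\ sum_term (pad_right t) = t.
Proof.
  induction t as [|[a v] t [IH1 [IH2 IH3]]]; [repeat split |].
  unfold first_term, second_term, sum_term in *; simpl.
  rewrite IH1, IH2, IH3, Rplus_0_r. repeat split.
Qed.

Lemma pad_left_terms t :
  first_term (pad_left t) = zeros t /\ second_term (pad_left t) = t /\ sum_term (pad_left t) = t.
Proof.
  induction t as [|[a v] t [IH1 [IH2 IH3]]]; [repeat split |].
  unfold first_term, second_term, sum_term in *; simpl.
  rewrite IH1, IH2, IH3, Rplus_0_l. repeat split.
Qed.

Lemma imp_ineq_app H t1 c1 t2 c2 :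
  provable (FImp H (FIneq t1 c1)) -> provable (FImp H (FIneq t2 c2)) ->
  provable (FImp H (FIneq (t1 ++ t2) (c1 + c2))).
Proof.
  intros h1 h2.
  destruct (pad_right_terms t1) as [e1 [e2 e3]], (pad_left_terms t2) as [f1 [f2 f3]].
  pose proof (imp_sum (pad_right t1 ++ pad_left t2) c1 c2) as hsum.
  unfold first_term, second_term, sum_term in hsum. rewrite !map_app in hsum.
  fold (first_term (pad_right t1)) (first_term (pad_left t2)) (second_term (pad_right t1))
    (second_term (pad_left t2)) (sum_term (pad_right t1)) (sum_term (pad_left t2)) in hsum.
  rewrite e1, e2, e3, f1, f2, f3 in hsum.
  refine (imp_trans _ _ _ (imp_and _ _ _ _ _) hsum).
  - apply (imp_entails _ _ _ _ _ h1), equiv_app_zeros.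
  - apply (imp_entails _ _ _ _ _ h2).
    apply (entails_trans _ _ _ _ _ _ (proj1 (equiv_app_zeros t1 t2 c2))), iff_elim_l, AxF3.
    apply Permutation_app_comm.
Qed.

Lemma opposite_pair_ge0 b v : b <> 0 -> provable (FIneq [(b, v); (- b, v)] 0).
Proof.
  intro hb. destruct (Rlt_or_le 0 b) as [hpos | hneg].
  - apply (RuleMP _ _ (AxF1 v)).
    apply (entails_trans _ _ _ _ _ _ (entails_scale b _ 0 hpos)), entails_eq; simpl;
      f_equal; try f_equal; try f_equal; ring.
  - apply (RuleMP _ _ (AxF1 v)).
    apply (entails_trans _ _ [(-1, v); (1, v)] 0); [apply iff_elim_l, AxF3, perm_swap |].
    apply (entails_trans _ _ _ _ _ _ (entails_scale (- b) _ 0 ltac:(lra))), entails_eq; simpl;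
      f_equal; try f_equal; try f_equal; ring.
Qed.

Lemma entails_add_provable l t s c :
  first_term l = t -> sum_term l = s -> provable (FIneq (second_term l) 0) -> entails t c s c.
Proof.
  intros <- <- h0. rewrite <- (Rplus_0_r c) at 2.
  refine (imp_trans _ _ _ (imp_and _ _ _ (imp_refl _) (imp_weaken _ _ h0)) (imp_sum l c 0)).
Qed.

Lemma equiv_merge a b v t : equiv_terms ((a, v) :: (b, v) :: t) ((a + b, v) :: t).
Proof.
  destruct (Req_dec b 0) as [-> | hb].
  - rewrite Rplus_0_r. apply equiv_sym, (equiv_insert_zero [(a, v)] t v).
  - destruct (pad_right_terms t) as [e1 [e2 e3]].
    assert (hsplit : equiv_terms ((a + b, v) :: t) ((a + b, v) :: (0, v) :: t))
      by apply (equiv_insert_zero [(a + b, v)] t v).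
    intro c. split.
    + apply (entails_trans _ _ ((a + b, v) :: (0, v) :: t) c); [| apply hsplit].
      apply (entails_add_provable ((a, b, v) :: (b, - b, v) :: pad_right t));
        unfold first_term, second_term, sum_term; simpl;
        fold (first_term (pad_right t)) (second_term (pad_right t)) (sum_term (pad_right t)).
      * rewrite e1. reflexivity.
      * rewrite e3, Rplus_opp_r. reflexivity.
      * rewrite e2. apply (RuleMP _ _ (opposite_pair_ge0 b v hb)).
        exact (proj1 (equiv_app_zeros t [(b, v); (- b, v)] 0)).
    + apply (entails_trans _ _ _ _ _ _ (proj1 (hsplit c))).
      apply (entails_add_provable ((a + b, - b, v) :: (0, b, v) :: pad_right t));
        unfold first_term, second_term, sum_term; simpl;
        fold (first_term (pad_right t)) (second_term (pad_right t)) (sum_term (pad_right t)).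
      * rewrite e1. reflexivity.
      * rewrite e3. do 3 f_equal; ring.
      * rewrite e2. pattern b at 2. rewrite <- (Ropp_involutive b).
        apply (RuleMP _ _ (opposite_pair_ge0 (- b) v ltac:(lra))).
        exact (proj1 (equiv_app_zeros t [(- b, v); (- - b, v)] 0)).
Qed.

Fixpoint coef (t : term) (v : nat) : R :=
  match t with
  | [] => 0
  | (a, w) :: t' => (if Nat.eq_dec w v then a else 0) + coef t' v
  end.

Lemma coef_app t1 t2 v : coef (t1 ++ t2) v = coef t1 v + coef t2 v.
Proof. induction t1 as [|[a w] t IH]; simpl; [lra | rewrite IH; lra]. Qed.

Lemma coef_perm t t' v : Permutation t t' -> coef t v = coef t' v.
Proof. induction 1 as [| [a w] | [a w] [b x] |]; simpl; lra. Qed.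

Lemma coef_scale d t v : coef (scale d t) v = d * coef t v.
Proof. induction t as [|[a w] t IH]; simpl; [lra | rewrite IH; destruct (Nat.eq_dec w v); lra]. Qed.

Lemma coef_notin t v : ~ In v (map snd t) -> coef t v = 0.
Proof.
  induction t as [|[a w] t IH]; simpl; intro h; [lra |].
  destruct (Nat.eq_dec w v); [tauto |]. rewrite IH; [lra | tauto].
Qed.

Lemma coef_nodup_in r a v : NoDup (map snd r) -> In (a, v) r -> coef r v = a.
Proof.
  induction r as [|[b w] r IH]; simpl; intros hnd hin; [tauto |].
  inversion hnd as [| ? ? hw hnd']; subst.
  destruct hin as [e | hin].
  - inversion e; subst. destruct (Nat.eq_dec v v); [| tauto]. rewrite coef_notin; [lra | exact hw].
  - destruct (Nat.eq_dec w v) as [<- | ne].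
    + exfalso. apply hw, (in_map snd _ _ hin).
    + rewrite IH; auto. lra.
Qed.

Lemma coef_nonzero_in t v : coef t v <> 0 -> exists a, In (a, v) t.
Proof.
  induction t as [|[a w] t IH]; simpl; intro h; [lra |].
  destruct (Nat.eq_dec w v) as [<- | ne].
  - exists a. auto.
  - destruct IH as [b hb]; [lra |]. exists b. auto.
Qed.

Definition reduced (r : term) : Prop := NoDup (map snd r) /\ forall p, In p r -> fst p <> 0.

Lemma reduced_incl r r' :
  reduced r -> NoDup (map snd r') -> (forall v, coef r v = coef r' v) -> incl r r'.
Proof.
  intros [hnd hnz] hnd' hc [a v] hin.
  pose proof (coef_nodup_in _ _ _ hnd hin) as ha. rewrite hc in ha.
  destruct (coef_nonzero_in r' v) as [b hb]; [rewrite ha; exact (hnz _ hin) |].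
  rewrite (coef_nodup_in _ _ _ hnd' hb) in ha. subst b. exact hb.
Qed.

Lemma reduced_perm r1 r2 :
  reduced r1 -> reduced r2 -> (forall v, coef r1 v = coef r2 v) -> Permutation r1 r2.
Proof.
  intros h1 h2 hc. apply NoDup_Permutation.
  - apply (NoDup_map_inv snd), h1.
  - apply (NoDup_map_inv snd), h2.
  - intro x. split; apply reduced_incl.
    + exact h1.
    + apply h2.
    + exact hc.
    + exact h2.
    + apply h1.
    + intro v. symmetry. apply hc.
Qed.

Lemma nodup_vars_or_repeat (t : term) :
  NoDup (map snd t) \/ exists a b v t', Permutation t ((a, v) :: (b, v) :: t').
Proof.
  induction t as [|[a v] t [nd | [a' [b' [w [t' hp]]]]]].
  - left. constructor.
  - destruct (in_dec Nat.eq_dec v (map snd t)) as [hin | hn].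
    + right. apply in_map_iff in hin. destruct hin as [[b w] [ew hin]]. simpl in ew. subst w.
      apply in_split in hin. destruct hin as [l1 [l2 ->]].
      exists a, b, v, (l1 ++ l2). constructor. symmetry. apply Permutation_middle.
    + left. simpl. constructor; auto.
  - right. exists a', b', w, ((a, v) :: t').
    rewrite hp. rewrite perm_swap. apply perm_skip, perm_swap.
Qed.

Lemma reduce_term n : forall t, (length t <= n)%nat ->
  exists r, equiv_terms t r /\ reduced r /\ forall v, coef r v = coef t v.
Proof.
  induction n as [|n IH]; intros t hlen.
  - destruct t; [| simpl in hlen; lia].
    exists []. split; [apply equiv_refl | split; [split; [constructor | simpl; tauto] | reflexivity]].
  - destruct (classic (exists a, In (0, a) t)) as [[v hin] | hnz].
    + apply in_split in hin. destruct hin as [t1 [t2 ->]].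
      destruct (IH (t1 ++ t2)) as [r [he [hr hc]]].
      { rewrite length_app in *. simpl in hlen. lia. }
      exists r. split; [| split; [exact hr |]].
      * exact (equiv_trans _ _ _ (equiv_sym _ _ (equiv_insert_zero t1 t2 v)) he).
      * intro w. rewrite hc, !coef_app. simpl. destruct (Nat.eq_dec v w); lra.
    + destruct (nodup_vars_or_repeat t) as [nd | [a [b [v [t' hp]]]]].
      * exists t. split; [apply equiv_refl | split; [split; [exact nd |] | reflexivity]].
        intros [a v] hin ha. apply hnz. exists v. simpl in ha. subst a. exact hin.
      * destruct (IH ((a + b, v) :: t')) as [r [he [hr hc]]].
        { apply Permutation_length in hp. simpl in *. lia. }
        exists r. split; [| split; [exact hr |]].
        -- apply (equiv_trans _ _ _ (equiv_perm _ _ hp)), (equiv_trans _ _ _ (equiv_merge a b v t')), he.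
        -- intro w. rewrite hc, (coef_perm _ _ _ hp). simpl. destruct (Nat.eq_dec v w); lra.
Qed.

Theorem equiv_of_coef t u : (forall v, coef t v = coef u v) -> equiv_terms t u.
Proof.
  intro h.
  destruct (reduce_term _ t (le_n _)) as [r1 [e1 [h1 c1]]].
  destruct (reduce_term _ u (le_n _)) as [r2 [e2 [h2 c2]]].
  apply (equiv_trans _ _ _ e1), (fun e => equiv_trans _ _ _ e (equiv_sym _ _ e2)).
  apply equiv_perm, reduced_perm; auto. intro v. rewrite c1, c2. auto.
Qed.

Lemma entails_of_coef t u c d : (forall v, coef t v = coef u v) -> d <= c -> entails t c u d.
Proof.
  intros h hd. apply (entails_trans _ _ _ _ _ _ (entails_weaken _ _ _ hd)), (equiv_of_coef t u h d).
Qed.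

Lemma nil_ge0 : provable (FIneq [] 0).
Proof.
  apply (RuleMP _ _ (AxF1 0%nat)), entails_of_coef; [| lra].
  intro v. cbn [coef]. destruct (Nat.eq_dec 0 v); lra.
Qed.

Lemma not_nil_ge c : c > 0 -> provable (FNot (FIneq [] c)).
Proof.
  intro hc. apply (imp_absurd _ (FLe [] 0)).
  - apply imp_weaken. unfold FLe. simpl. rewrite Ropp_0. apply nil_ge0.
  - apply (imp_trans _ _ _ (AxF6 [] c 0 hc)), and_elim_r.
Qed.

(** * Fourier-Motzkin elimination for strict and non-strict inequalities *)

Definition value (t : term) (x : nat -> R) : R := eval_term (fun v (_ : unit) => x v) t tt.

Definition update (x : nat -> R) (v : nat) (s : R) (w : nat) : R :=
  if Nat.eq_dec w v then s else x w.

Lemma value_update t x v s : value t (update x v s) = value t x + coef t v * (s - x v).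
Proof.
  unfold value, update. induction t as [|[a w] t IH]; simpl; [lra |].
  rewrite IH. destruct (Nat.eq_dec w v) as [-> | ne]; lra.
Qed.

Lemma entails_value t c u c' x : entails t c u c' -> c <= value t x -> c' <= value u x.
Proof.
  intros he hc. pose proof (soundness _ he unit (inhabits tt) (fun v _ => x v)) as hs.
  rewrite sat_imp in hs. apply Rge_le, hs. intros []. apply Rle_ge, hc.
Qed.

Lemma value_coef_zero t x : (forall v, coef t v = 0) -> value t x = 0.
Proof.
  intro h.
  pose proof (entails_value _ _ _ _ x (proj1 (equiv_of_coef t [] h (value t x))) (Rle_refl _)).
  pose proof (entails_value _ _ _ _ x (proj2 (equiv_of_coef t [] h 0)) (Rle_refl _)).
  unfold value in *. simpl in *. lra.
Qed.

Definition rlt_if (b : bool) (x y : R) : Prop := if b then x < y else x <= y.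

Lemma rlt_if_orb_l b b' x y : rlt_if (b || b') x y -> rlt_if b x y.
Proof. destruct b, b'; simpl; lra. Qed.

Lemma rlt_if_orb_r b b' x y : rlt_if (b || b') x y -> rlt_if b' x y.
Proof. destruct b, b'; simpl; lra. Qed.

Lemma rlt_if_le b x y : rlt_if b x y -> x <= y.
Proof. destruct b; simpl; lra. Qed.

Lemma rlt_if_of_lt b x y : x < y -> rlt_if b x y.
Proof. destruct b; simpl; lra. Qed.

Lemma rlt_if_affine_pos b a V c x0 s :
  0 < a -> rlt_if b c (V + a * (s - x0)) <-> rlt_if b (x0 + (c - V) / a) s.
Proof.
  intro ha. set (q := (c - V) / a). assert (hc : c = V + a * q) by (unfold q; field; lra).
  rewrite hc. destruct b; simpl; split; intro h; nra.
Qed.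

Lemma rlt_if_affine_neg b a V c x0 s :
  a < 0 -> rlt_if b c (V + a * (s - x0)) <-> rlt_if b s (x0 + (c - V) / a).
Proof.
  intro ha. set (q := (c - V) / a). assert (hc : c = V + a * q) by (unfold q; field; lra).
  rewrite hc. destruct b; simpl; split; intro h; nra.
Qed.

Lemma rlt_if_thresholds b a a' V V' c c' x0 :
  0 < a -> a' < 0 -> rlt_if b (- a' * c + a * c') (- a' * V + a * V') ->
  rlt_if b (x0 + (c - V) / a) (x0 + (c' - V') / a').
Proof.
  intros ha ha'. set (q := (c - V) / a). set (q' := (c' - V') / a').
  assert (hc : c = V + a * q) by (unfold q; field; lra).
  assert (hc' : c' = V' + a' * q') by (unfold q'; field; lra).
  assert (haa : a * a' < 0) by nra.
  rewrite hc, hc'. destruct b; simpl; intro h; nra.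
Qed.

Lemma exists_max {A : Type} (l : list A) (f : A -> R) :
  l <> [] -> exists m, In m l /\ forall y, In y l -> f y <= f m.
Proof.
  induction l as [|a l IH]; intro hne; [congruence |].
  destruct l as [|b l'].
  - exists a. split; [left; reflexivity |]. intros y [<- | []]. lra.
  - destruct IH as [m [hm hmax]]; [congruence |].
    destruct (Rle_dec (f a) (f m)).
    + exists m. split; [right; exact hm |]. intros y [<- | hy]; auto.
    + exists a. split; [left; reflexivity |]. intros y [<- | hy]; [lra |].
      specialize (hmax y hy). lra.
Qed.

Lemma exists_between {A B : Type} (L : list A) (U : list B) (lo : A -> R) (sl : A -> bool)
  (hi : B -> R) (su : B -> bool) :
  (forall p n, In p L -> In n U -> rlt_if (sl p || su n) (lo p) (hi n)) ->
  exists s, (forall p, In p L -> rlt_if (sl p) (lo p) s) /\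
            (forall n, In n U -> rlt_if (su n) s (hi n)).
Proof.
  intro h.
  destruct L as [|p0 L']; [destruct U as [|n0 U'] |].
  - exists 0. split; intros ? [].
  - destruct (exists_max (n0 :: U') (fun n => - hi n)) as [M [_ hmin]]; [congruence |].
    exists (hi M - 1). split; [intros ? [] |].
    intros n hn. specialize (hmin n hn). apply rlt_if_of_lt. lra.
  - destruct (exists_max (p0 :: L') lo) as [m [hm hmax]]; [congruence |].
    destruct U as [|n0 U'].
    + exists (lo m + 1). split; [| intros ? []].
      intros p hp. specialize (hmax p hp). apply rlt_if_of_lt. lra.
    + destruct (exists_max (n0 :: U') (fun n => - hi n)) as [M [hM hmin]]; [congruence |].
      destruct (Rle_lt_or_eq_dec _ _ (rlt_if_le _ _ _ (h m M hm hM))) as [hlt | heq].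
      * exists ((lo m + hi M) / 2).
        split; [intros p hp; specialize (hmax p hp) | intros n hn; specialize (hmin n hn)];
          apply rlt_if_of_lt; lra.
      * exists (lo m). split.
        -- intros p hp. rewrite heq. exact (rlt_if_orb_l _ _ _ _ (h p M hp hM)).
        -- intros n hn. exact (rlt_if_orb_r _ _ _ _ (h m n hm hn)).
Qed.

Record constraint := Constraint { lhs : term; rhs : R; strict : bool }.

Definition holds (x : nat -> R) (k : constraint) : Prop := rlt_if (strict k) (rhs k) (value (lhs k) x).

Definition feasible (S : list constraint) : Prop := exists x, forall k, In k S -> holds x k.

Definition cadd (k k' : constraint) : constraint :=
  Constraint (lhs k ++ lhs k') (rhs k + rhs k') (strict k || strict k').

Definition cscale (l : R) (k : constraint) : constraint := Constraint (scale l (lhs k)) (l * rhs k) (strict k).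

Inductive derivable (S : list constraint) : constraint -> Prop :=
| derivable_in k : In k S -> derivable S k
| derivable_add k k' : derivable S k -> derivable S k' -> derivable S (cadd k k')
| derivable_scale l k : l > 0 -> derivable S k -> derivable S (cscale l k).

Lemma derivable_trans S S' k : (forall k', In k' S' -> derivable S k') -> derivable S' k -> derivable S k.
Proof. intros h hd. induction hd; [auto | apply derivable_add | apply derivable_scale]; auto. Qed.

Definition absurd (k : constraint) : Prop := (forall v, coef (lhs k) v = 0) /\ ~ rlt_if (strict k) (rhs k) 0.

Definition supported (vs : list nat) (S : list constraint) : Prop :=
  forall k, In k S -> forall w, ~ In w vs -> coef (lhs k) w = 0.

Definition select (P : R -> Prop) (dec : forall r, {P r} + {~ P r}) (v : nat)
  (S : list constraint) : list constraint :=
  filter (fun k => if dec (coef (lhs k) v) then true else false) S.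

Lemma in_select P dec v S k : In k (select P dec v S) <-> In k S /\ P (coef (lhs k) v).
Proof. unfold select. rewrite filter_In. destruct (dec _); intuition congruence. Qed.

(* [v] cancels in this positive combination of a lower bound [p] and an upper bound [n] on [v]. *)
Definition combine (v : nat) (p n : constraint) : constraint :=
  cadd (cscale (- coef (lhs n) v) p) (cscale (coef (lhs p) v) n).

Definition eliminate (v : nat) (S : list constraint) : list constraint :=
  select (fun r => r = 0) (fun r => Req_EM_T r 0) v S ++
  flat_map (fun p => map (combine v p) (select (fun r => r < 0) (fun r => Rlt_dec r 0) v S))
           (select (Rlt 0) (Rlt_dec 0) v S).

Lemma in_eliminate v S k : In k (eliminate v S) ->
  (In k S /\ coef (lhs k) v = 0) \/
  exists p n, In p S /\ In n S /\ 0 < coef (lhs p) v /\ coef (lhs n) v < 0 /\ k = combine v p n.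
Proof.
  unfold eliminate. rewrite in_app_iff, in_flat_map. intros [hk | [p [hp hk]]].
  - left. apply in_select in hk. exact hk.
  - right. apply in_map_iff in hk. destruct hk as [n [<- hn]].
    apply in_select in hp, hn. destruct hp as [hp hcp], hn as [hn hcn].
    exists p, n. auto.
Qed.

Lemma coef_combine v p n w :
  coef (lhs (combine v p n)) w = - coef (lhs n) v * coef (lhs p) w + coef (lhs p) v * coef (lhs n) w.
Proof. simpl. rewrite coef_app, !coef_scale. reflexivity. Qed.

Lemma value_combine v p n x :
  value (lhs (combine v p n)) x = - coef (lhs n) v * value (lhs p) x + coef (lhs p) v * value (lhs n) x.
Proof. unfold value. simpl. unfold scale. rewrite eval_term_app, !eval_term_scale. reflexivity. Qed.

Lemma eliminate_derivable v S k : In k (eliminate v S) -> derivable S k.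
Proof.
  intro hk. destruct (in_eliminate v S k hk) as [[hin _] | [p [n [hp [hn [hap [han ->]]]]]]].
  - apply derivable_in, hin.
  - apply derivable_add; apply derivable_scale; try lra; apply derivable_in; assumption.
Qed.

Lemma eliminate_supported v vs S : supported (v :: vs) S -> supported vs (eliminate v S).
Proof.
  intros hsupp k hk w hw.
  destruct (Nat.eq_dec w v) as [-> | ne].
  - destruct (in_eliminate v S k hk) as [[_ hv] | [p [n [_ [_ [_ [_ ->]]]]]]];
      [exact hv | rewrite coef_combine; ring].
  - assert (hw' : ~ In w (v :: vs)) by (intros [e | e]; [congruence | tauto]).
    destruct (in_eliminate v S k hk) as [[hin _] | [p [n [hp [hn [_ [_ ->]]]]]]].
    + exact (hsupp k hin w hw').
    + rewrite coef_combine, (hsupp p hp w hw'), (hsupp n hn w hw'). ring.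
Qed.

(* The value of [v] at which [k] becomes tight, the other coordinates being those of [x]. *)
Definition threshold (x : nat -> R) (v : nat) (k : constraint) : R :=
  x v + (rhs k - value (lhs k) x) / coef (lhs k) v.

Lemma holds_update x v s k :
  holds (update x v s) k <-> rlt_if (strict k) (rhs k) (value (lhs k) x + coef (lhs k) v * (s - x v)).
Proof. unfold holds. rewrite value_update. reflexivity. Qed.

Lemma eliminate_feasible v S : feasible (eliminate v S) -> feasible S.
Proof.
  intros [x hx].
  set (lower := select (Rlt 0) (Rlt_dec 0) v S).
  set (upper := select (fun r => r < 0) (fun r => Rlt_dec r 0) v S).
  destruct (exists_between lower upper (threshold x v) strict (threshold x v) strict)
    as [s [hlo hup]].
  { intros p n hp hn.
    assert (hc : holds x (combine v p n)).
    { apply hx. unfold eliminate. apply in_or_app. right. apply in_flat_map.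
      exists p. split; [exact hp | apply in_map, hn]. }
    apply in_select in hp, hn. unfold holds in hc. rewrite value_combine in hc.
    apply rlt_if_thresholds; [apply hp | apply hn | exact hc]. }
  exists (update x v s). intros k hk. apply holds_update.
  destruct (Rtotal_order (coef (lhs k) v) 0) as [hneg | [hzero | hpos]].
  - apply rlt_if_affine_neg; [exact hneg |]. apply hup, in_select. auto.
  - rewrite hzero, Rmult_0_l, Rplus_0_r. apply hx.
    unfold eliminate. apply in_or_app. left. apply in_select. auto.
  - apply rlt_if_affine_pos; [exact hpos |]. apply hlo, in_select. auto.
Qed.

Theorem infeasible_absurd vs : forall S, supported vs S -> ~ feasible S ->
  exists k, derivable S k /\ absurd k.
Proof.
  induction vs as [|v vs IH]; intros S hsupp hinf.
  - destruct (not_all_ex_not _ _ (fun h => hinf (ex_intro _ (fun _ => 0) h))) as [k hk].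
    apply imply_to_and in hk. destruct hk as [hin hk].
    assert (hcoef : forall w, coef (lhs k) w = 0) by (intro w; apply (hsupp k hin); tauto).
    exists k. split; [apply derivable_in, hin | split; [exact hcoef |]].
    unfold holds in hk. rewrite value_coef_zero in hk; assumption.
  - destruct (IH (eliminate v S)) as [k [hd hk]].
    + apply eliminate_supported, hsupp.
    + intro h. apply hinf, (eliminate_feasible v), h.
    + exists k. split; [| exact hk]. exact (derivable_trans _ _ _ (eliminate_derivable v S) hd).
Qed.

(** * Refuting a conjunction of literals *)

Definition opp_term (u : term) : term := map (fun p => (- fst p, snd p)) u.

Lemma coef_opp_term u v : coef (opp_term u) v = - coef u v.
Proof. induction u as [|[a w] u IH]; simpl; [lra | rewrite IH; destruct (Nat.eq_dec w v); lra]. Qed.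

(* The constraints [P] together with [u < d], written as the strict constraint [- u > - d]. *)
Definition system (P : list (term * R)) (u : term) (d : R) : list constraint :=
  Constraint (opp_term u) (- d) true :: map (fun tc => Constraint (fst tc) (snd tc) false) P.

Definition vars (S : list constraint) : list nat := flat_map (fun k => map snd (lhs k)) S.

Lemma supported_vars S : supported (vars S) S.
Proof. intros k hk w hw. apply coef_notin. intro h. apply hw, in_flat_map. eauto. Qed.

Lemma holds_system x P u d : (forall k, In k (system P u d) -> holds x k) ->
  (forall tc, In tc P -> snd tc <= value (fst tc) x) /\ value u x < d.
Proof.
  intro hx. split.
  - intros tc htc. apply (hx (Constraint (fst tc) (snd tc) false)).
    right. apply in_map_iff. eauto.
  - specialize (hx _ (or_introl eq_refl)). unfold holds, value, opp_term in hx. simpl in hx.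
    rewrite eval_term_opp in hx. unfold value. lra.
Qed.

(* A constraint derived from [system P u d] is, coefficientwise, a consequence [T >= C] of [H]
   minus [mu] times [u >= d]; strictness can only come from [u < d]. *)
Lemma derivable_decompose H P u d :
  (forall tc, In tc P -> provable (FImp H (FIneq (fst tc) (snd tc)))) ->
  forall k, derivable (system P u d) k -> exists T C mu,
    0 <= mu /\ provable (FImp H (FIneq T C)) /\
    (forall v, coef (lhs k) v = coef T v - mu * coef u v) /\ rhs k = C - mu * d /\
    (strict k = true -> mu > 0).
Proof.
  intros hP k hd. induction hd as [k hk | k1 k2 _ IH1 _ IH2 | l k hl _ IH].
  - destruct hk as [<- | hk].
    + exists [], 0, 1. simpl. split; [lra | split; [apply imp_weaken, nil_ge0 |]].
      split; [intro v; rewrite coef_opp_term; ring | split; [ring | lra]].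
    + apply in_map_iff in hk. destruct hk as [[t c] [<- hin]].
      exists t, c, 0. simpl. split; [lra | split; [apply (hP (t, c) hin) |]].
      split; [intro v; ring | split; [ring | discriminate]].
  - destruct IH1 as [T1 [C1 [m1 [h1 [p1 [c1 [e1 s1]]]]]]].
    destruct IH2 as [T2 [C2 [m2 [h2 [p2 [c2 [e2 s2]]]]]]].
    exists (T1 ++ T2), (C1 + C2), (m1 + m2). repeat split; simpl.
    + lra.
    + apply imp_ineq_app; assumption.
    + intro v. rewrite !coef_app, c1, c2. ring.
    + rewrite e1, e2. ring.
    + intro hs. apply Bool.orb_true_iff in hs.
      destruct hs as [hs | hs]; [specialize (s1 hs) | specialize (s2 hs)]; lra.
  - destruct IH as [T [C [m [h [p [c [e s]]]]]]].
    exists (scale l T), (l * C), (l * m). repeat split; simpl.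
    + nra.
    + apply (imp_entails _ _ _ _ _ p), entails_scale, hl.
    + intro v. rewrite !coef_scale, c. ring.
    + rewrite e. ring.
    + intro hs. specialize (s hs). nra.
Qed.

Lemma infeasible_system_refutes H P u d :
  (forall tc, In tc P -> provable (FImp H (FIneq (fst tc) (snd tc)))) ->
  provable (FImp H (FNot (FIneq u d))) -> ~ feasible (system P u d) -> provable (FNot H).
Proof.
  intros hP hN hinf.
  destruct (infeasible_absurd _ _ (supported_vars _) hinf) as [k [hd [hc0 hk]]].
  destruct (derivable_decompose H P u d hP k hd) as [T [C [mu [hmu [hT [hc [he hs]]]]]]].
  assert (hcT : forall v, coef T v = mu * coef u v).
  { intro v. specialize (hc v). rewrite hc0 in hc. lra. }
  rewrite he in hk.
  destruct (Req_dec mu 0) as [hm0 | hmu0].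
  - rewrite hm0 in hk, hs.
    assert (hC : C > 0) by (destruct (strict k); simpl in hk; [specialize (hs eq_refl) |]; lra).
    apply (imp_absurd H (FIneq [] C)).
    + apply (imp_entails _ _ _ _ _ hT), entails_of_coef; [| lra].
      intro v. rewrite hcT, hm0. simpl. ring.
    + apply imp_weaken, not_nil_ge, hC.
  - assert (hCd : mu * d <= C) by (destruct (strict k); simpl in hk; lra).
    apply (imp_absurd H (FIneq u d)); [| exact hN].
    apply (imp_entails _ _ _ _ _ hT).
    apply (entails_trans _ _ _ _ _ _ (entails_scale (/ mu) T C ltac:(apply Rinv_0_lt_compat; lra))).
    apply entails_of_coef.
    + intro v. rewrite coef_scale, hcT. field. exact hmu0.
    + apply (Rmult_le_reg_l mu); [lra |]. rewrite <- Rmult_assoc, Rinv_r, Rmult_1_l; assumption.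
Qed.

Lemma eval_term_value {D : Type} (s : nat -> D -> R) t y : eval_term s t y = value t (fun v => s v y).
Proof. unfold value. induction t as [|[a v] t IH]; simpl; [reflexivity | rewrite IH; reflexivity]. Qed.

(* Over functions, each negated inequality [~ u >= d] only needs one point of the domain with
   [u < d]: the domain of all points satisfying [P] serves for all of them at once. *)
Lemma model_of_feasible_systems P N :
  (forall ud, In ud N -> feasible (system P (fst ud) (snd ud))) -> N <> [] ->
  exists (D : Type) (s : nat -> D -> R), inhabited D /\
    (forall tc, In tc P -> sat s (FIneq (fst tc) (snd tc))) /\
    (forall ud, In ud N -> ~ sat s (FIneq (fst ud) (snd ud))).
Proof.
  intros hfeas hne.
  set (D := {x : nat -> R | forall tc, In tc P -> snd tc <= value (fst tc) x}).
  exists D, (fun v (y : D) => proj1_sig y v). split; [| split].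
  - destruct N as [| ud0 N']; [congruence |].
    destruct (hfeas ud0 (or_introl eq_refl)) as [x0 hx0].
    constructor. exists x0. apply (holds_system _ _ _ _ hx0).
  - intros tc htc [x hx]. rewrite eval_term_value. apply Rle_ge, hx, htc.
  - intros ud hud hsat. destruct (hfeas ud hud) as [x hx].
    destruct (holds_system _ _ _ _ hx) as [hxP hxu].
    specialize (hsat (exist _ x hxP)). rewrite eval_term_value in hsat.
    change (value (fst ud) x >= snd ud) in hsat. lra.
Qed.

Theorem refute_literals H P N :
  (forall tc, In tc P -> provable (FImp H (FIneq (fst tc) (snd tc)))) ->
  (forall ud, In ud N -> provable (FImp H (FNot (FIneq (fst ud) (snd ud))))) ->
  ~ (exists (D : Type) (s : nat -> D -> R), inhabited D /\
       (forall tc, In tc P -> sat s (FIneq (fst tc) (snd tc))) /\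
       (forall ud, In ud N -> ~ sat s (FIneq (fst ud) (snd ud)))) ->
  provable (FNot H).
Proof.
  intros hP hN hno.
  (* The refutable literal [~ [] >= 1] covers the case of infeasible [P] and makes the
     model below nonempty. *)
  set (N' := ([], 1) :: N).
  destruct (classic (exists ud, In ud N' /\ ~ feasible (system P (fst ud) (snd ud))))
    as [[[u d] [hin hinf]] | hfeas].
  - apply (infeasible_system_refutes H P u d hP); [| exact hinf].
    destruct hin as [e | hin].
    + injection e as <- <-. apply imp_weaken, not_nil_ge. lra.
    + exact (hN _ hin).
  - destruct (model_of_feasible_systems P N') as [D [s [hD [hsP hsN]]]].
    + intros ud hud. apply NNPP. intro hinf. apply hfeas. eauto.
    + discriminate.
    + exfalso. apply hno. exists D, s. split; [exact hD | split; [exact hsP |]].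
      intros ud hud. apply hsN. right. exact hud.
Qed.

(** * Completeness *)

Fixpoint atoms (f : form) : list (term * R) :=
  match f with
  | FIneq t c => [(t, c)]
  | FNot g => atoms g
  | FAnd g h => atoms g ++ atoms h
  end.

(* The atoms of [f] become [PVar i], [PVar (i + 1)], ... in order of occurrence. *)
Fixpoint skeleton (f : form) (i : nat) : pform :=
  match f with
  | FIneq _ _ => PVar i
  | FNot g => PNot (skeleton g i)
  | FAnd g h => PAnd (skeleton g i) (skeleton h (i + length (atoms g)))
  end.

Definition atom_at (atl : list (term * R)) (i : nat) : form :=
  FIneq (fst (nth i atl ([], 0))) (snd (nth i atl ([], 0))).

Lemma skeleton_subst f : forall pre post,
  psubst (atom_at (pre ++ atoms f ++ post)) (skeleton f (length pre)) = f.
Proof.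
  induction f as [t c | g IH | g IHg h IHh]; intros pre post; simpl.
  - unfold atom_at. rewrite nth_middle. reflexivity.
  - rewrite IH. reflexivity.
  - rewrite <- app_assoc, IHg, <- length_app.
    replace (pre ++ atoms g ++ atoms h ++ post) with ((pre ++ atoms g) ++ atoms h ++ post)
      by (symmetry; apply app_assoc).
    rewrite IHh. reflexivity.
Qed.

Lemma skeleton_local f : forall i val val',
  (forall j, (i <= j < i + length (atoms f))%nat -> val j = val' j) ->
  peval val (skeleton f i) = peval val' (skeleton f i).
Proof.
  induction f as [t c | g IH | g IHg h IHh]; intros i val val' he; simpl.
  - apply he. simpl. lia.
  - rewrite (IH i val val'); auto.
  - simpl in he. rewrite length_app in he.
    rewrite (IHg i val val'), (IHh _ val val'); auto; intros j hj; apply he; lia.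
Qed.

Definition ptrue : pform := PImp P0 P0.

Fixpoint literals (w : list bool) (i : nat) : pform :=
  match w with
  | [] => ptrue
  | b :: w' => PAnd (if b then PVar i else PNot (PVar i)) (literals w' (S i))
  end.

Lemma literals_imp sb w : forall i j, (j < length w)%nat ->
  provable (FImp (psubst sb (literals w i))
                 (psubst sb (if nth j w false then PVar (i + j) else PNot (PVar (i + j))))).
Proof.
  induction w as [|b w IH]; intros i j hj; simpl in hj; [lia |].
  destruct j as [|j]; simpl.
  - rewrite Nat.add_0_r. apply and_elim_l.
  - apply (imp_trans _ _ _ (and_elim_r _ _)).
    replace (i + S j)%nat with (S i + j)%nat by lia. apply IH. lia.
Qed.

Lemma literals_true val w : forall i,
  (forall j, (j < length w)%nat -> val (i + j)%nat = nth j w false) -> peval val (literals w i) = true.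
Proof.
  induction w as [|b w IH]; intros i h; simpl.
  - destruct (val 0%nat); reflexivity.
  - rewrite IH.
    + specialize (h 0%nat). rewrite Nat.add_0_r in h. simpl in h.
      destruct b; simpl; rewrite h; auto; lia.
    + intros j hj. replace (S i + j)%nat with (i + S j)%nat by lia. apply (h (S j)). simpl. lia.
Qed.

Fixpoint all_words (n : nat) : list (list bool) :=
  match n with
  | 0 => [[]]
  | S n => flat_map (fun w => [true :: w; false :: w]) (all_words n)
  end.

Lemma in_all_words n w : In w (all_words n) <-> length w = n.
Proof.
  revert w. induction n as [|n IH]; intro w; simpl.
  - destruct w; simpl; intuition (try congruence; try lia).
  - rewrite in_flat_map. split.
    + intros [w' [hw' hin]]. apply IH in hw'. simpl in hin.
      destruct hin as [<- | [<- | []]]; simpl; congruence.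
    + destruct w as [|b w]; simpl; [lia |]. intro hw. exists w.
      split; [apply IH; lia | destruct b; simpl; auto].
Qed.

Fixpoint pconj (l : list pform) : pform :=
  match l with
  | [] => ptrue
  | q :: l' => PAnd q (pconj l')
  end.

Lemma pconj_provable sb l : (forall q, In q l -> provable (psubst sb q)) -> provable (psubst sb (pconj l)).
Proof.
  induction l as [|q l IH]; intro h; simpl.
  - apply imp_refl.
  - apply and_intro; [apply h; simpl; auto | apply IH; intros; apply h; simpl; auto].
Qed.

Lemma pconj_false val l q : In q l -> peval val q = false -> peval val (pconj l) = false.
Proof.
  induction l as [|q' l IH]; intros hin hq; simpl in *; [tauto |].
  destruct hin as [<- | hin]; [rewrite hq; reflexivity | rewrite IH; auto; apply Bool.andb_false_r].
Qed.

Definition falsifying_rows (f : form) : list (list bool) :=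
  filter (fun w => negb (peval (fun i => nth i w false) (skeleton f 0))) (all_words (length (atoms f))).

Lemma skeleton_from_rows f :
  tautology (PImp (pconj (map (fun w => PNot (literals w 0)) (falsifying_rows f))) (skeleton f 0)).
Proof.
  intro val. simpl. destruct (peval val (skeleton f 0)) eqn:ep; [now rewrite Bool.andb_false_r |].
  set (w := map val (seq 0 (length (atoms f)))).
  assert (hw : forall i, (i < length (atoms f))%nat -> nth i w false = val i).
  { intros i hi. unfold w. rewrite nth_indep with (d' := val 0%nat) by (rewrite length_map, length_seq; lia).
    rewrite map_nth, seq_nth by lia. reflexivity. }
  rewrite (pconj_false val _ (PNot (literals w 0))); [reflexivity | |].
  - apply (in_map (fun w => PNot (literals w 0))), filter_In. split.
    + apply in_all_words. unfold w. rewrite length_map, length_seq. reflexivity.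
    + rewrite (skeleton_local f 0 _ val), ep; [reflexivity |]. intros i hi. apply hw. lia.
  - simpl. rewrite literals_true; [reflexivity |]. intros j hj. symmetry. apply hw.
    unfold w in hj. rewrite length_map, length_seq in hj. exact hj.
Qed.

Definition atoms_with (f : form) (w : list bool) (b : bool) : list (term * R) :=
  map (fun i => nth i (atoms f) ([], 0))
      (filter (fun i => Bool.eqb (nth i w false) b) (seq 0 (length (atoms f)))).

Lemma in_atoms_with f w b tc : In tc (atoms_with f w b) ->
  exists i, (i < length (atoms f))%nat /\ nth i w false = b /\ FIneq (fst tc) (snd tc) = atom_at (atoms f) i.
Proof.
  unfold atoms_with. rewrite in_map_iff. intros [i [<- hi]].
  apply filter_In in hi. destruct hi as [hi hb]. apply in_seq in hi. apply Bool.eqb_prop in hb.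
  exists i. split; [lia | split; [exact hb | reflexivity]].
Qed.

Lemma atoms_with_in f w i : (i < length (atoms f))%nat ->
  In (nth i (atoms f) ([], 0)) (atoms_with f w (nth i w false)).
Proof.
  intro hi. apply (in_map (fun i => nth i (atoms f) ([], 0))), filter_In.
  split; [apply in_seq; lia | apply Bool.eqb_reflx].
Qed.

Lemma refute_falsifying_row f w : valid f -> In w (falsifying_rows f) ->
  provable (psubst (atom_at (atoms f)) (PNot (literals w 0))).
Proof.
  intros hv hw. apply filter_In in hw. destruct hw as [hlen hfalse].
  apply in_all_words in hlen. apply Bool.negb_true_iff in hfalse.
  apply (refute_literals _ (atoms_with f w true) (atoms_with f w false)).
  - intros tc htc. destruct (in_atoms_with _ _ _ _ htc) as [i [hi [hb ->]]].
    pose proof (literals_imp (atom_at (atoms f)) w 0 i ltac:(lia)) as h. rewrite hb in h. exact h.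
  - intros tc htc. destruct (in_atoms_with _ _ _ _ htc) as [i [hi [hb he]]].
    pose proof (literals_imp (atom_at (atoms f)) w 0 i ltac:(lia)) as h. rewrite hb in h.
    simpl in h. rewrite he. exact h.
  - intros [D [s [hD [hpos hneg]]]].
    pose proof (hv D hD s) as hs.
    rewrite <- (skeleton_subst f [] []), app_nil_r in hs. apply sat_psubst in hs.
    rewrite (skeleton_local f 0 _ (fun i => nth i w false)) in hs; [congruence |].
    intros i hi. simpl in hi. destruct (nth i w false) eqn:hb.
    + apply truth_spec. rewrite <- hb in hpos. apply (hpos _ (atoms_with_in f w i ltac:(lia))).
    + apply Bool.not_true_is_false. rewrite truth_spec. rewrite <- hb in hneg.
      apply (hneg _ (atoms_with_in f w i ltac:(lia))).
Qed.

Theorem completeness f : valid f -> provable f.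
Proof.
  intro hv. rewrite <- (skeleton_subst f [] []), app_nil_r.
  set (rows := map (fun w => PNot (literals w 0)) (falsifying_rows f)).
  refine (RuleMP _ _ (pconj_provable (atom_at (atoms f)) rows _) (AxTaut _ _)).
  - intros q hq. apply in_map_iff in hq. destruct hq as [w [<- hw]].
    apply refute_falsifying_row; assumption.
  - exists (PImp (pconj rows) (skeleton f 0)), (atom_at (atoms f)).
    split; [apply skeleton_from_rows | reflexivity].
Qed.

Theorem theorem7p3 : forall f : form, provable f <-> valid f.
Proof. intro f. split; [apply soundness | apply completeness]. Qed.
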